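(* Let $\mathbf K$ be the complete linearly ordered set obtained from $\mathbb N=\{0,1,2,\dots\}$ (usual order) by adding a top element $\omega$, regarded as a complete lattice, and let $\mathbf L=\mathbf K\times\{0,1\}$ be the product lattice (componentwise order, with $\{0,1\}$ ordered by $0<1$). Then in the complete lattice $\mathbf L$: the element $(\omega,0)$ is a relative generator, but $(\omega,0)$ belongs to every maximal proper complete sublattice of $\mathbf L$. Moreover, the set $\Gamma$ of all non-generators of $\mathbf L$ is a complete sublattice of $\mathbf L$.
   Context: A complete lattice is a partially ordered set in which every subset (including the empty set) has a meet and a join. A complete sublattice of a complete lattice $\mathbf L$ is a subset $T\subseteq L$ closed under arbitrary meets and joins computed in $L$, including those of the empty set (so $T$ contains the minimum and the maximum of $L$). For $X\subseteq L$, $\langle X\rangle$ is the intersection of all complete sublattices containing $X$, and $\langle X,a\rangle=\langle X\cup\{a\}\rangle$. An element $a$ is a non-generator if for every $X\subseteq L$, $\langle X,a\rangle=L$ implies $\langle X\rangle=L$; otherwise $a$ is a relative generator. A maximal proper complete sublattice is a complete sublattice $T\ne L$ that is not properly contained in any complete sublattice other than $L$. *)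

From Stdlib Require Import Arith.

Section Generic.
Variable (A : Type) (le : A -> A -> Prop).

Definition is_ub (S : A -> Prop) (x : A) : Prop := forall y, S y -> le y x.
Definition is_lb (S : A -> Prop) (x : A) : Prop := forall y, S y -> le x y.
Definition is_join (S : A -> Prop) (x : A) : Prop :=
  is_ub S x /\ forall z, is_ub S z -> le x z.
Definition is_meet (S : A -> Prop) (x : A) : Prop :=
  is_lb S x /\ forall z, is_lb S z -> le z x.

(** Complete sublattice: closed under arbitrary joins and meets (including
    those of the empty set) computed in the ambient lattice. *)
Definition complete_sublattice (T : A -> Prop) : Prop :=
  forall S : A -> Prop, (forall y, S y -> T y) ->
    (forall x, is_join S x -> T x) /\ (forall x, is_meet S x -> T x).

Definition generated (X : A -> Prop) : A -> Prop :=
  fun a => forall T, complete_sublattice T -> (forall x, X x -> T x) -> T a.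

Definition full (T : A -> Prop) : Prop := forall a, T a.

Definition add_elem (X : A -> Prop) (a : A) : A -> Prop :=
  fun x => X x \/ x = a.

Definition non_generator (a : A) : Prop :=
  forall X : A -> Prop, full (generated (add_elem X a)) -> full (generated X).

Definition relative_generator (a : A) : Prop := ~ non_generator a.

Definition maximal_proper_complete_sublattice (T : A -> Prop) : Prop :=
  complete_sublattice T /\ ~ full T /\
  forall T' : A -> Prop, complete_sublattice T' -> (forall x, T x -> T' x) ->
    (forall x, T' x <-> T x) \/ full T'.

End Generic.

Inductive Kel : Type := Fin (n : nat) | Omega.

Definition Kle (x y : Kel) : Prop :=
  match x, y with
  | _, Omega => True
  | Omega, Fin _ => False
  | Fin m, Fin n => m <= n
  end.

(** {0,1} as bool with false < true *)
Definition Ble (x y : bool) : Prop := x = false \/ y = true.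

Definition L : Type := (Kel * bool)%type.

Definition Lle (x y : L) : Prop := Kle (fst x) (fst y) /\ Ble (snd x) (snd y).

(** A set of the form [↓p ∪ ↑q] is always a complete sublattice. Every element
    [a] of [L] other than the bottom [(0,0)] and the top [(ω,1)] is missed by
    such a set [D] while [D] and [a] together generate [L] (the elements
    missing from [D] are binary joins and meets of [a] with members of [D]),
    so [a] is a relative generator. Hence the non-generators are exactly the
    bottom and the top, i.e. the complete sublattice [↓⊥ ∪ ↑⊤].
    A complete sublattice [T] omitting [(ω,0)] contains only boundedly many
    [(n,0)], say [n <= M], since otherwise their join [(ω,0)] would lie in [T];
    then [T] sits inside the proper complete sublattice [↓(M+1,0) ∪ ↑(0,1)],
    which contains [(M+1,0) ∉ T], so [T] is not maximal. *)

From Stdlib Require Import Classical Lia Arith.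

Definition doubleton {A : Type} (u v : A) : A -> Prop := fun y => y = u \/ y = v.

Section CompleteSublattices.
Variables (A : Type) (le : A -> A -> Prop).

Definition down_up (p q : A) : A -> Prop := fun x => le x p \/ le q x.

Lemma complete_sublattice_ext (T T' : A -> Prop) :
  (forall x, T x <-> T' x) -> complete_sublattice A le T -> complete_sublattice A le T'.
Proof.
  intros HTT' HT S HS.
  assert (HST : forall y, S y -> T y) by (intros y Hy; apply HTT', HS, Hy).
  destruct (HT S HST) as [Hjoin Hmeet].
  split; intros x Hx; apply HTT'; auto.
Qed.

Lemma complete_sublattice_join2 (T : A -> Prop) (u v x : A) :
  complete_sublattice A le T -> T u -> T v -> is_join A le (doubleton u v) x -> T x.
Proof.
  intros HT Hu Hv. apply (HT (doubleton u v)). intros y [-> | ->]; assumption.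
Qed.

Lemma complete_sublattice_meet2 (T : A -> Prop) (u v x : A) :
  complete_sublattice A le T -> T u -> T v -> is_meet A le (doubleton u v) x -> T x.
Proof.
  intros HT Hu Hv. apply (HT (doubleton u v)). intros y [-> | ->]; assumption.
Qed.

Lemma complete_sublattice_least (T : A -> Prop) (b : A) :
  complete_sublattice A le T -> (forall z, le b z) -> T b.
Proof.
  intros HT Hb. apply (proj1 (HT (fun _ => False) (fun _ h => match h with end))).
  split; [intros _ [] | auto].
Qed.

Lemma complete_sublattice_greatest (T : A -> Prop) (t : A) :
  complete_sublattice A le T -> (forall z, le z t) -> T t.
Proof.
  intros HT Ht. apply (proj2 (HT (fun _ => False) (fun _ h => match h with end))).
  split; [intros _ [] | auto].
Qed.

Lemma non_generator_of_in_every_sublattice (a : A) :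
  (forall T, complete_sublattice A le T -> T a) -> non_generator A le a.
Proof.
  intros Ha X Hfull z T HT HX. apply (Hfull z T HT).
  intros y [Hy | ->]; [apply HX, Hy | apply Ha, HT].
Qed.

Lemma relative_generator_of_cover (D : A -> Prop) (a : A) :
  complete_sublattice A le D -> ~ D a ->
  (forall T, complete_sublattice A le T -> (forall x, D x -> T x) -> T a -> full A T) ->
  relative_generator A le a.
Proof.
  intros HD HDa Hcover Hng. apply HDa.
  assert (Hfull : full A (generated A le D)).
  { apply Hng. intros z T HT HDT.
    apply Hcover; [exact HT | intros x Hx; apply HDT; left; exact Hx | apply HDT; right; reflexivity]. }
  apply (Hfull a D HD); auto.
Qed.

Hypothesis le_trans : forall x y z, le x y -> le y z -> le x z.

Lemma down_up_complete_sublattice (p q : A) : complete_sublattice A le (down_up p q).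
Proof.
  intros S HS; split; intros x [Hub Hlub].
  - destruct (classic (exists y, S y /\ le q y)) as [[y [Sy Hqy]] | Hnone].
    + right. apply le_trans with y; auto.
    + left. apply Hlub. intros y Sy.
      destruct (HS y Sy) as [Hyp | Hqy]; [exact Hyp | exfalso; eauto].
  - destruct (classic (exists y, S y /\ le y p)) as [[y [Sy Hyp]] | Hnone].
    + left. apply le_trans with y; auto.
    + right. apply Hlub. intros y Sy.
      destruct (HS y Sy) as [Hyp | Hqy]; [exfalso; eauto | exact Hqy].
Qed.

Lemma non_generator_of_down_up_least_greatest (b t x : A) :
  (forall z, le b z) -> (forall z, le z t) -> down_up b t x -> non_generator A le x.
Proof.
  intros Hb Ht Hx. apply non_generator_of_in_every_sublattice. intros T HT.
  destruct Hx as [Hxb | Htx].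
  - apply (complete_sublattice_least T x HT). intros z; apply le_trans with b; auto.
  - apply (complete_sublattice_greatest T x HT). intros z; apply le_trans with t; auto.
Qed.

End CompleteSublattices.

Ltac solve_Lle := unfold down_up, doubleton, Lle, Kle, Ble in *; simpl in *;
  intuition (try lia; try discriminate; try congruence).

Lemma Lle_trans (x y z : L) : Lle x y -> Lle y z -> Lle x z.
Proof. destruct x as [[a|] b], y as [[c|] d], z as [[e|] f]; solve_Lle. Qed.

Lemma is_meet_true_false (k k' : Kel) :
  Kle k k' -> is_meet L Lle (doubleton (k, true) (k', false)) (k, false).
Proof.
  intros Hk; split.
  - intros y [-> | ->]; destruct k, k'; solve_Lle.
  - intros [z c] Hz.
    pose proof (Hz _ (or_introl eq_refl)); pose proof (Hz _ (or_intror eq_refl)).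
    destruct k, k', z; solve_Lle.
Qed.

Lemma is_join_false_true (k k' : Kel) :
  Kle k' k -> is_join L Lle (doubleton (k, false) (k', true)) (k, true).
Proof.
  intros Hk; split.
  - intros y [-> | ->]; destruct k, k'; solve_Lle.
  - intros [z c] Hz.
    pose proof (Hz _ (or_introl eq_refl)); pose proof (Hz _ (or_intror eq_refl)).
    destruct k, k', z; solve_Lle.
Qed.

Lemma is_join_unbounded_false (P : nat -> Prop) :
  ~ (exists M, forall n, P n -> n <= M) ->
  is_join L Lle (fun y => exists n, P n /\ y = (Fin n, false)) (Omega, false).
Proof.
  intros Hunbounded; split.
  - intros y [n [_ ->]]; solve_Lle.
  - intros [[m|] c] Hz; [exfalso | solve_Lle].
    apply Hunbounded. exists m. intros n Hn.
    apply (Hz _ (ex_intro _ n (conj Hn eq_refl))).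
Qed.

Lemma relative_generator_Omega_false : relative_generator L Lle (Omega, false).
Proof.
  apply (relative_generator_of_cover _ _ (down_up L Lle (Fin 0, false) (Fin 0, true))).
  - exact (down_up_complete_sublattice _ _ Lle_trans _ _).
  - solve_Lle.
  - intros T HT HD Ha [[[|m]|] [|]]; try solve [apply HD; solve_Lle].
    + apply (complete_sublattice_meet2 L Lle T (Fin (S m), true) (Omega, false)); auto.
      * apply HD; solve_Lle.
      * apply is_meet_true_false; exact I.
    + exact Ha.
Qed.

Lemma relative_generator_Fin0_true : relative_generator L Lle (Fin 0, true).
Proof.
  apply (relative_generator_of_cover _ _ (down_up L Lle (Omega, false) (Fin 1, true))).
  - exact (down_up_complete_sublattice _ _ Lle_trans _ _).
  - solve_Lle.
  - intros T HT HD Ha [[[|m]|] [|]]; try solve [exact Ha | apply HD; solve_Lle].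
Qed.

Lemma relative_generator_Fin_succ (n : nat) (b : bool) :
  relative_generator L Lle (Fin (S n), b).
Proof.
  apply (relative_generator_of_cover _ _
           (down_up L Lle (Fin n, true) (Fin (S (S n)), false))).
  - exact (down_up_complete_sublattice _ _ Lle_trans _ _).
  - destruct b; solve_Lle.
  - intros T HT HD Ha.
    assert (Htrue : T (Fin (S n), true)).
    { destruct b; [exact Ha |].
      apply (complete_sublattice_join2 L Lle T (Fin (S n), false) (Fin n, true)); auto.
      - apply HD; solve_Lle.
      - apply is_join_false_true; simpl; lia. }
    assert (Hfalse : T (Fin (S n), false)).
    { apply (complete_sublattice_meet2 L Lle T (Fin (S n), true) (Fin (S (S n)), false)); auto.
      - apply HD; solve_Lle.
      - apply is_meet_true_false; simpl; lia. }
    intros [[m|] c]; [| apply HD; solve_Lle].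
    destruct (Nat.eq_dec m (S n)) as [-> | Hm]; [destruct c; assumption |].
    apply HD. destruct (Nat.lt_ge_cases m (S n)); [left | right]; solve_Lle.
Qed.

Lemma non_generator_L_bottom_or_top (x : L) :
  non_generator L Lle x -> down_up L Lle (Fin 0, false) (Omega, true) x.
Proof.
  intros Hx. destruct x as [[[|n]|] [|]].
  - exfalso; exact (relative_generator_Fin0_true Hx).
  - left; solve_Lle.
  - exfalso; exact (relative_generator_Fin_succ n true Hx).
  - exfalso; exact (relative_generator_Fin_succ n false Hx).
  - right; solve_Lle.
  - exfalso; exact (relative_generator_Omega_false Hx).
Qed.

Lemma maximal_proper_complete_sublattice_Omega_false (T : L -> Prop) :
  maximal_proper_complete_sublattice L Lle T -> T (Omega, false).
Proof.
  intros [HT [_ Hmax]]. apply NNPP; intros HTa.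
  destruct (classic (exists M, forall n, T (Fin n, false) -> n <= M))
    as [[M HM] | Hunbounded].
  - destruct (Hmax (down_up L Lle (Fin (S M), false) (Fin 0, true))) as [Heq | Hfull].
    + exact (down_up_complete_sublattice _ _ Lle_trans _ _).
    + intros [[n|] [|]] Hx; [right | left | right | contradiction]; solve_Lle.
      pose proof (HM n Hx); lia.
    + assert (HTM : T (Fin (S M), false)) by (apply Heq; left; solve_Lle).
      pose proof (HM _ HTM); lia.
    + pose proof (Hfull (Omega, false)); solve_Lle.
  - apply HTa.
    refine (proj1 (HT (fun y => exists n, T (Fin n, false) /\ y = (Fin n, false)) _) _ _).
    + intros y [n [Hn ->]]; exact Hn.
    + exact (is_join_unbounded_false _ Hunbounded).
Qed.

Theorem proposition2 :
  relative_generator L Lle (Omega, false) /\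
  (forall T : L -> Prop, maximal_proper_complete_sublattice L Lle T -> T (Omega, false)) /\
  complete_sublattice L Lle (non_generator L Lle).
Proof.
  split; [exact relative_generator_Omega_false |].
  split; [exact maximal_proper_complete_sublattice_Omega_false |].
  apply (complete_sublattice_ext _ _ (down_up L Lle (Fin 0, false) (Omega, true))).
  - intros x; split; [| apply non_generator_L_bottom_or_top].
    apply (non_generator_of_down_up_least_greatest _ _ Lle_trans); intros [[m|] c]; solve_Lle.
  - exact (down_up_complete_sublattice _ _ Lle_trans _ _).
Qed.
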